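(* Let $G$ be a finite graph with no isolated vertices such that there is no nontrivial circuit injection $f:G_M\rightarrow B$ with $B$ a binary matroid. If $G$ has $2N$ vertices, then $G$ is Hamiltonian; if $G$ has $2N+1$ vertices, then $G$ is almost Hamiltonian.
   Context: Graphs are undirected without loops or multiple edges. $G_M$ is the cycle matroid of $G$ (cells: edges; circuits: edge sets of cycles of $G$). A matroid is a pair $(S,\mathscr{C})$, $S\neq\emptyset$, $\mathscr{C}\subseteq 2^S$, satisfying: (I) $A,B\in\mathscr{C}$, $A\subseteq B$ implies $A=B$; (II) $A,B\in\mathscr{C}$, $a\in A\cap B$, $b\in (A\cup B)\setminus(A\cap B)$ implies there exists $D\in\mathscr{C}$ with $D\subseteq A\cup B$, $a\notin D$, $b\in D$. A matroid is binary if the symmetric difference of any two circuits is a union of pairwise disjoint circuits. A circuit injection $f:G_M\rightarrow B$ is a bijection from $E(G)$ onto the cells of $B$ sending each circuit of $G$ to a circuit of $B$; it is nontrivial if $B$ has a circuit not equal to the image of any circuit of $G$. $G$ is Hamiltonian if some circuit contains all its vertices. A graph with $n$ vertices is almost Hamiltonian if every set of $n-1$ of its vertices is contained in the vertex set of some circuit. *)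

From mathcomp Require Import all_boot.
Set Implicit Arguments. Unset Strict Implicit. Unset Printing Implicit Defensive.

Definition simple_graph (T : finType) (e : rel T) : Prop :=
  symmetric e /\ irreflexive e.

Definition edges (T : finType) (e : rel T) : {set {set T}} :=
  [set A : {set T} | [exists x, exists y, e x y && (A == [set x; y])]].

Definition graph_cycle (T : finType) (e : rel T) (c : seq T) : Prop :=
  ucycle e c /\ 3 <= size c.

Definition cycle_edges (T : finType) (c : seq T) : {set {set T}} :=
  [set [set x; next c x] | x in c].

(* Circuits of the cycle matroid G_M: edge sets of cycles of G. *)
Definition graph_circuit (T : finType) (e : rel T) (X : {set {set T}}) : Prop :=
  exists c, graph_cycle e c /\ X = cycle_edges c.

Definition no_isolated (T : finType) (e : rel T) : Prop :=
  forall x, exists y, e x y.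

Definition hamiltonian (T : finType) (e : rel T) : Prop :=
  exists c, graph_cycle e c /\ forall x : T, x \in c.

Definition almost_hamiltonian (T : finType) (e : rel T) : Prop :=
  forall A : {set T}, #|A| = #|T| - 1 ->
    exists c, graph_cycle e c /\ A \subset [set x in c].

(* Matroid on the finite nonempty cell set S, given by its circuits C. *)
Definition matroid (S : finType) (C : {set {set S}}) : Prop :=
  0 < #|S| /\
  (forall A B, A \in C -> B \in C -> A \subset B -> A = B) /\
  (forall A B a b, A \in C -> B \in C -> a \in A :&: B ->
     b \in (A :|: B) :\: (A :&: B) ->
     exists2 D, D \in C & [/\ D \subset A :|: B, a \notin D & b \in D]).

Definition binary_matroid (S : finType) (C : {set {set S}}) : Prop :=
  forall A B, A \in C -> B \in C ->
    exists P : {set {set S}},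
      [/\ P \subset C, trivIset P & cover P = (A :\: B) :|: (B :\: A)].

Definition circuit_injection (T S : finType) (e : rel T) (C : {set {set S}})
    (f : {set T} -> S) : Prop :=
  [/\ {in edges e &, injective f},
      (forall s : S, exists2 A, A \in edges e & f A = s) &
      (forall X, graph_circuit e X -> f @: X \in C)].

Definition nontrivial_ci (T S : finType) (e : rel T) (C : {set {set S}})
    (f : {set T} -> S) : Prop :=
  exists2 Y, Y \in C & forall X, graph_circuit e X -> f @: X <> Y.

(* Edge sets are vectors over GF(2); the boundary of an edge set is its set of
   odd-degree vertices, and it is additive for symmetric difference.  Fix a
   nonempty vertex set T0 that is the boundary of some edge set.  The edge sets
   with boundary empty or T0 form a GF(2)-subspace, and the minimal nonempty
   members of any such subspace are the circuits of a binary matroid.  An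
   inclusion-minimal T0-join is such a circuit but not a cycle.  If T0 lies on
   no cycle, every cycle is a circuit as well, since a proper nonempty part of
   a cycle has a nonempty boundary on that cycle.  Hence, in the absence of
   nontrivial circuit injections into binary matroids, every nonempty boundary
   lies on a cycle.  Applied to two edges this makes G connected; in a connected
   graph every even vertex set is a boundary, and we take T0 = V when |V| is
   even, and any (|V| - 1)-set when |V| is odd. *)

From mathcomp Require Import all_boot.
From Stdlib Require Import Classical.
Set Implicit Arguments. Unset Strict Implicit. Unset Printing Implicit Defensive.

Section SymmetricDifference.
Variable U : finType.
Implicit Types A B : {set U}.

Definition symdiff A B := (A :\: B) :|: (B :\: A).

Lemma in_symdiff A B x : (x \in symdiff A B) = (x \in A) (+) (x \in B).
Proof. by rewrite !inE; case: (x \in A); case: (x \in B). Qed.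

Lemma symdiffs0 A : symdiff A set0 = A.
Proof. by apply/setP => x; rewrite in_symdiff inE addbF. Qed.

Lemma symdiff0s A : symdiff set0 A = A.
Proof. by apply/setP => x; rewrite in_symdiff inE. Qed.

Lemma symdiffv A : symdiff A A = set0.
Proof. by apply/setP => x; rewrite in_symdiff inE addbb. Qed.

Lemma symdiff_subU A B : symdiff A B \subset A :|: B.
Proof. by apply/subsetP => x; rewrite in_symdiff inE; case: (x \in A). Qed.

Lemma symdiff_setD A B : B \subset A -> symdiff A B = A :\: B.
Proof. by rewrite -setD_eq0 /symdiff => /eqP ->; rewrite setU0. Qed.

Lemma odd_card_symdiff A B : odd #|symdiff A B| = odd #|A| (+) odd #|B|.
Proof.
have AIB_sub : A :&: B \subset A :|: B by apply: subset_trans (subsetIl A B) (subsetUl A B).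
have -> : symdiff A B = (A :|: B) :\: (A :&: B).
  by apply/setP => x; rewrite in_symdiff !inE; case: (x \in A); case: (x \in B).
by rewrite cardsD (setIidPr AIB_sub) oddB ?subset_leq_card // -oddD cardsUI oddD.
Qed.

End SymmetricDifference.

Lemma imset_symdiff (aT rT : finType) (f : aT -> rT) (A B : {set aT}) :
  injective f -> f @: symdiff A B = symdiff (f @: A) (f @: B).
Proof.
move=> f_inj; apply/setP => y; rewrite in_symdiff.
apply/imsetP/idP => [[x + ->]|yAB]; first by rewrite !mem_imset // in_symdiff.
have : y \in f @: (A :|: B) by rewrite imsetU inE; move: yAB; case: (y \in f @: A).
by case/imsetP => x _ yfx; exists x => //; move: yAB; rewrite yfx !mem_imset // in_symdiff.
Qed.

Lemma card_setI2 (U : finType) (F : {set U}) (a b : U) :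
  a != b -> #|F :&: [set a; b]| = (a \in F) + (b \in F).
Proof.
move=> ab; rewrite -sum1_card (eq_bigl (fun y => (y \in [set a; b]) && (y \in F))).
  by rewrite big_mkcondr big_setU1 ?big_set1 ?inE.
by move=> y; rewrite !inE andbC.
Qed.

Section UniqCycle.
Variables (T : eqType) (c : seq T).
Hypothesis c_uniq : uniq c.

Lemma next_closed_cycle (P : pred T) :
  {in c, forall x, P x -> P (next c x)} -> {in c &, forall x y, P x -> P y}.
Proof.
move=> P_next x y xc yc; have imp_trans : transitive (fun x y => P x ==> P y).
  by move=> a b d /implyP ba /implyP ad; apply/implyP => /ba /ad.
have : cycle (fun x y => P x ==> P y) c.
  by apply: cycle_from_next => // z zc; apply/implyP/P_next.
by rewrite cycle_all2rel // => /allrelP/(_ x y xc yc)/implyP.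
Qed.

(* Otherwise {x, next c x} would be closed under next, hence contain c. *)
Lemma next_neq_prev x : 3 <= size c -> x \in c -> next c x != prev c x.
Proof.
move=> c_size xc; apply/eqP => nx_px.
have : size c <= size [:: x; next c x].
  apply: uniq_leq_size => // y yc; rewrite !inE.
  apply: (next_closed_cycle (P := fun z => (z == x) || (z == next c x)) _ xc yc).
    move=> z zc /orP [] /eqP ->; first by rewrite eqxx orbT.
    by rewrite nx_px next_prev ?eqxx.
  by rewrite eqxx.
by rewrite leqNgt (leq_trans _ c_size).
Qed.

End UniqCycle.

Section Boundary.
Variable T : finType.
Implicit Types (F G : {set {set T}}) (u v x : T).

Definition boundary F := [set x | odd #|[set A in F | x \in A]|].

Lemma boundary0 : boundary set0 = set0.
Proof. by apply/setP => x; rewrite !inE setIdE set0I cards0. Qed.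

Lemma boundary_symdiff F G :
  boundary (symdiff F G) = symdiff (boundary F) (boundary G).
Proof.
apply/setP => x; rewrite in_symdiff !inE -odd_card_symdiff; congr (odd _).
apply: eq_card => A; rewrite !(inE, in_symdiff).
by case: (A \in F); case: (A \in G); case: (x \in A).
Qed.

Lemma boundary_edge u v :
  u != v -> boundary [set [set u; v]] = symdiff [set u] [set v].
Proof.
move=> uv; apply/setP => x; rewrite in_symdiff !inE setIdE.
have [xuv|xuv] := boolP (x \in [set u; v]).
  rewrite (setIidPl _) ?cards1; last by rewrite sub1set inE.
  move: xuv; rewrite !inE => /orP [] /eqP ->; rewrite eqxx ?(negbTE uv) //.
  by rewrite eq_sym (negbTE uv).
rewrite (_ : _ :&: _ = set0) ?cards0; last first.
  by apply/setP => A; rewrite !inE; apply/negP => /andP [/eqP ->]; apply/negP.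
by move: xuv; rewrite !inE negb_or => /andP [/negbTE -> /negbTE ->].
Qed.

Lemma boundary_sub_cover F : boundary F \subset cover F.
Proof.
apply/subsetP => x; rewrite inE => /odd_gt0/card_gt0P [A].
by rewrite inE => /andP [AF xA]; apply/bigcupP; exists A.
Qed.

End Boundary.

Section GraphBoundary.
Variables (T : finType) (e : rel T).
Hypotheses (e_sym : symmetric e) (e_irr : irreflexive e).
Implicit Types (F G : {set {set T}}) (u v x y : T).

Lemma edges_pair u v : e u v -> [set u; v] \in edges e.
Proof.
by move=> euv; rewrite inE; apply/existsP; exists u; apply/existsP; exists v; rewrite euv eqxx.
Qed.

Lemma symdiff_edges F G :
  F \subset edges e -> G \subset edges e -> symdiff F G \subset edges e.
Proof. by move=> Fe Ge; apply: subset_trans (symdiff_subU F G) _; rewrite subUset Fe. Qed.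

Lemma cycle_edges_sub c : cycle e c -> cycle_edges c \subset edges e.
Proof. by move=> ce; apply/subsetP => _ /imsetP [x xc ->]; apply/edges_pair/next_cycle. Qed.

Lemma connect_boundary u v : connect e u v ->
  exists2 F : {set {set T}}, F \subset edges e & boundary F = symdiff [set u] [set v].
Proof.
case/connectP => p; elim: p u => [|w p IH] u /=.
  by move=> _ ->; exists set0; rewrite ?sub0set ?boundary0 ?symdiffv.
case/andP => euw wp vp; have [F Fe bF] := IH w wp vp.
have uw : u != w by apply: contraTneq euw => ->; rewrite e_irr.
exists (symdiff [set [set u; w]] F); first by rewrite symdiff_edges // sub1set edges_pair.
rewrite boundary_symdiff boundary_edge // bF.
by apply/setP => x; rewrite !in_symdiff -addbA (addbA (x \in [set w])) addbb.
Qed.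

Lemma even_boundary (conn : forall x y, connect e x y) (T0 : {set T}) :
  ~~ odd #|T0| -> exists2 F : {set {set T}}, F \subset edges e & boundary F = T0.
Proof.
have [n] := ubnP #|T0|; elim: n T0 => // n IH T0 T0_lt T0_even.
have [->|[u uT0]] := set_0Vmem T0; first by exists set0; rewrite ?sub0set ?boundary0.
have /set0Pn [w] : T0 :\ u != set0.
  by apply: contra T0_even => /eqP T0u; rewrite (cardsD1 u) uT0 T0u cards0.
rewrite !inE => /andP [wu wT0].
have uw_sub : [set u; w] \subset T0 by rewrite subUset !sub1set uT0.
have card_uw : #|[set u; w]| = 2 by rewrite cards2 eq_sym wu.
have card_rest : #|T0 :\: [set u; w]| + 2 = #|T0|.
  by rewrite cardsD (setIidPr uw_sub) card_uw subnK // -card_uw subset_leq_card.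
have rest_lt : #|T0 :\: [set u; w]| < n.
  by move: T0_lt; rewrite -card_rest addn2 ltnS => /ltnW.
have rest_even : ~~ odd #|T0 :\: [set u; w]|.
  by move: T0_even; rewrite -card_rest oddD addbF.
have [F Fe bF] := connect_boundary (conn u w).
have [G Ge bG] := IH _ rest_lt rest_even.
exists (symdiff G F); first exact: symdiff_edges.
rewrite boundary_symdiff bF bG; apply/setP => x; rewrite !(in_symdiff, inE).
have [->|xu] := eqVneq x u; first by rewrite uT0 eq_sym (negbTE wu).
by have [->|xw] := eqVneq x w; rewrite ?wT0 ?addbF.
Qed.

Lemma cycle_connect c x y : graph_cycle e c -> x \in c -> y \in c -> connect e x y.
Proof.
case=> /andP [+ _] _; case: c => // z p /= zp_cycle xc yc.
have from_z w : w \in z :: p -> connect e z w.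
  by move=> wc; apply: (path_connect zp_cycle); rewrite -cats1 -cat_cons mem_cat wc.
by apply: connect_trans (from_z y yc); rewrite sym_connect_sym // from_z.
Qed.

Lemma no_isolated_card_gt1 : no_isolated e -> 0 < #|T| -> 1 < #|T|.
Proof.
move=> no_iso /card_gt0P [x _]; have [y exy] := no_iso x.
have xy : x != y by apply: contraTneq exy => ->; rewrite e_irr.
by have := max_card [set x; y]; rewrite cards2 xy.
Qed.

End GraphBoundary.

Section CycleEdges.
Variables (T : finType) (c : seq T).
Hypotheses (c_uniq : uniq c) (c_size : 3 <= size c).
Implicit Types (F : {set {set T}}) (x y : T).

Lemma mem_cycle_edges y : y \in c -> [set y; next c y] \in cycle_edges c.
Proof. exact: imset_f. Qed.

Lemma boundary_sub_cycle F : F \subset cycle_edges c -> boundary F \subset [set x in c].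
Proof.
move=> Fc; apply/subsetP => x /(subsetP (boundary_sub_cover F)) /bigcupP [A AF].
have /imsetP [y yc ->] := subsetP Fc A AF.
by rewrite !inE => /orP [] /eqP ->; rewrite ?mem_next.
Qed.

Lemma incident_cycle_edges F x : F \subset cycle_edges c -> x \in c ->
  [set A in F | x \in A] = F :&: [set [set x; next c x]; [set prev c x; x]].
Proof.
move=> Fc xc; apply/setP => A; rewrite !inE; case AF: (A \in F) => //=.
have /imsetP [y yc ->] := subsetP Fc A AF.
apply/idP/idP => [|/orP [] /eqP ->]; rewrite ?inE ?eqxx ?orbT //.
by case/orP => /eqP ->; rewrite ?prev_next ?eqxx ?orbT.
Qed.

Lemma card_incident_cycle_edges F x : F \subset cycle_edges c -> x \in c ->
  #|[set A in F | x \in A]| = ([set x; next c x] \in F) + ([set prev c x; x] \in F).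
Proof.
move=> Fc xc; rewrite incident_cycle_edges // card_setI2 //.
apply/negP => /eqP /setP /(_ (next c x)); rewrite !inE eqxx orbT => /esym/orP [] /eqP.
  by move/eqP: (next_neq_prev c_uniq c_size xc).
move=> nx_x; move: (next_neq_prev c_uniq c_size xc).
by rewrite -{2}nx_x prev_next // nx_x eqxx.
Qed.

Lemma boundary_cycle_edges : boundary (cycle_edges c) = set0.
Proof.
apply/eqP; rewrite -subset0; apply/subsetP => x xb.
have := subsetP (boundary_sub_cycle (subxx _)) x xb.
rewrite inE => xc; move: xb; rewrite inE card_incident_cycle_edges //.
by rewrite mem_cycle_edges // -{2}(next_prev c_uniq x) mem_cycle_edges ?mem_prev.
Qed.

(* A vertex next c y with {y, next c y} in F but {next c y, next c (next c y)}
   not in F has degree 1 in F. *)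
Lemma boundary_proper_cycle_edges F :
  F \subset cycle_edges c -> F != set0 -> F != cycle_edges c -> boundary F != set0.
Proof.
move=> Fc F0 Fnc; pose P y := [set y; next c y] \in F.
have [A AF] := set0Pn _ F0; have /imsetP [y1 y1c A_y1] := subsetP Fc A AF.
have [B /imsetP [y0 y0c ->] y0F] : exists2 B, B \in cycle_edges c & B \notin F.
  by apply/subsetPn; apply: contra Fnc => cF; rewrite eqEsubset Fc.
have : has (fun y => P y && ~~ P (next c y)) c.
  apply: contraT => /hasPn P_next; case/negP: y0F.
  apply: (next_closed_cycle c_uniq (P := P) _ y1c y0c); last by rewrite /P -A_y1.
  by move=> y yc Py; move: (P_next y yc); rewrite Py /= negbK.
case/hasP => y yc /andP [Py Pny]; apply/set0Pn; exists (next c y).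
rewrite inE card_incident_cycle_edges ?mem_next // prev_next //.
by move: Pny Py; rewrite /P => /negbTE -> ->.
Qed.

End CycleEdges.

Section MinimalMembers.
Variables (S : finType) (W : pred {set S}).
Hypothesis W_symdiff : forall X Y, W X -> W Y -> W (symdiff X Y).

Definition minimal_members := [set X | minset [pred Y | (Y != set0) && W Y] X].

Lemma minimal_membersP X :
  reflect [/\ X != set0, W X & forall Y, Y != set0 -> W Y -> Y \subset X -> Y = X]
          (X \in minimal_members).
Proof.
rewrite inE; apply: (iffP minsetP) => [[/andP [X0 WX] minX]|[X0 WX minX]].
  by split=> // Y Y0 WY; apply: minX; rewrite /= Y0.
by split=> [|Y /andP [Y0 WY]]; [rewrite /= X0 | apply: minX].
Qed.

Lemma minimal_members_partition X : W X ->
  exists P : {set {set S}}, [/\ P \subset minimal_members, trivIset P & cover P = X].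
Proof.
have [n] := ubnP #|X|; elim: n X => // n IH X X_lt WX.
have [->|X0] := eqVneq X set0.
  by exists set0; rewrite sub0set /trivIset /cover !big_set0 cards0.
have [D minD DX] : {D | minset [pred Y | (Y != set0) && W Y] D & D \subset X}.
  by apply: minset_exists; rewrite /= X0.
have /minimal_membersP [D0 WD _] : D \in minimal_members by rewrite inE.
have W_rest : W (X :\: D) by rewrite -symdiff_setD //; apply: W_symdiff.
have rest_lt : #|X :\: D| < n.
  rewrite -ltnS (leq_trans _ X_lt) // ltnS cardsD (setIidPr DX).
  by rewrite ltn_subrL !card_gt0 X0 D0.
have [P [Pmin tP coverP]] := IH _ rest_lt W_rest.
have P0 : set0 \notin P.
  by apply/negP => /(subsetP Pmin) /minimal_membersP []; rewrite eqxx.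
have D_disj : {in P, forall B : {set S}, [disjoint D & B]}.
  move=> B BP; apply: disjointWr (bigcup_sup B BP) _; rewrite -/(cover P) coverP.
  by rewrite -setI_eq0 setDE setICA setICr setI0.
have [tDP _] := trivIsetU1 D_disj tP P0.
exists (D |: P); split=> //; first by rewrite subUset sub1set inE minD.
by rewrite /cover bigcup_setU big_set1 -/(cover P) coverP -{1}(setIidPr DX) setID.
Qed.

Lemma minimal_members_binary : binary_matroid minimal_members.
Proof.
move=> A B /minimal_membersP [_ WA _] /minimal_membersP [_ WB _].
exact: minimal_members_partition (W_symdiff WA WB).
Qed.

Lemma minimal_members_matroid : 0 < #|S| -> matroid minimal_members.
Proof.
move=> S_gt0; split=> //; split.
  by move=> A B /minimal_membersP [A0 WA _] /minimal_membersP [_ _ minB]; exact: minB.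
move=> A B a b /minimal_membersP [_ WA _] /minimal_membersP [_ WB _] aAB bAB.
have [P [Pmin _ coverP]] := minimal_members_partition (W_symdiff WA WB).
have : b \in cover P.
  by move: bAB; rewrite coverP in_symdiff !inE; case: (b \in A); case: (b \in B).
case/bigcupP => D DP bD; exists D; first exact: subsetP Pmin D DP.
have D_sub : D \subset symdiff A B by rewrite -coverP; apply: bigcup_sup.
split=> //; first exact: subset_trans D_sub (symdiff_subU A B).
apply: contraTN aAB => /(subsetP D_sub); rewrite in_symdiff !inE.
by case: (a \in A); case: (a \in B).
Qed.

End MinimalMembers.

Section BinaryInjection.
Variables (T : finType) (e : rel T).

Definition edge_cell := {A : {set T} | A \in edges e}.

Lemma val_insubd_imset (s0 : edge_cell) (F : {set {set T}}) :
  F \subset edges e -> val @: (insubd s0 @: F) = F.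
Proof.
move=> Fe; rewrite -imset_comp -[RHS]imset_id; apply: eq_in_imset => A AF /=.
by rewrite insubdK // (subsetP Fe).
Qed.

Variable F0 : {set {set T}}.
Hypotheses (F0_edges : F0 \subset edges e) (F0_boundary : boundary F0 != set0).
Hypothesis boundary_uncovered :
  forall c, graph_cycle e c -> ~ boundary F0 \subset [set x in c].

Let join_space : pred {set edge_cell} :=
  fun X => boundary (val @: X) \in [set set0; boundary F0].

Lemma join_space_symdiff (X Y : {set edge_cell}) :
  join_space X -> join_space Y -> join_space (symdiff X Y).
Proof.
rewrite /join_space imset_symdiff ?boundary_symdiff; last exact: val_inj.
by rewrite !inE => /orP [] /eqP -> /orP [] /eqP ->;
  rewrite ?symdiffs0 ?symdiff0s ?symdiffv eqxx ?orbT.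
Qed.

Lemma cycle_circuit c (Y : {set edge_cell}) :
  graph_cycle e c -> val @: Y = cycle_edges c -> Y \in minimal_members join_space.
Proof.
move=> c_cycle Yc; have [/andP [_ c_uniq] c_size] := c_cycle.
apply/minimal_membersP; split.
- rewrite -(imset_eq0 val) Yc; case: c c_size {c_cycle c_uniq Yc} => // x c _.
  by apply/set0Pn; exists [set x; next (x :: c) x]; rewrite mem_cycle_edges ?mem_head.
- by rewrite /join_space Yc boundary_cycle_edges // !inE eqxx.
move=> Z Z0 WZ ZY; apply/eqP; apply: contraT => ZnY.
have Zc : val @: Z \subset cycle_edges c by rewrite -Yc imsetS.
have : boundary (val @: Z) != set0.
  apply: (boundary_proper_cycle_edges c_uniq c_size Zc); first by rewrite imset_eq0.
  by rewrite -Yc (inj_eq (imset_inj val_inj)).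
move: WZ; rewrite /join_space !inE => /orP [/eqP -> |/eqP bZ _]; first by rewrite eqxx.
by case: (boundary_uncovered c_cycle); rewrite -bZ boundary_sub_cycle.
Qed.

Lemma minimal_join_circuit :
  exists2 Y, Y \in minimal_members join_space & boundary (val @: Y) = boundary F0.
Proof.
have [A0 A0F0] : exists A0, A0 \in F0.
  by apply/set0Pn; apply: contraNneq F0_boundary => ->; rewrite boundary0.
pose s0 : edge_cell := Sub A0 (subsetP F0_edges A0 A0F0).
pose join := [pred X : {set edge_cell} | boundary (val @: X) == boundary F0].
have [Y minY _] : {Y | minset join Y & Y \subset insubd s0 @: F0}.
  by apply: minset_exists; rewrite /= val_insubd_imset.
have bY : boundary (val @: Y) = boundary F0 by apply/eqP/(minsetp minY).
exists Y => //; apply/minimal_membersP; split.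
- by apply: contraNneq F0_boundary => Y0; rewrite -bY Y0 imset0 boundary0.
- by rewrite /join_space bY !inE eqxx orbT.
move=> Z Z0 WZ ZY; move: WZ; rewrite /join_space !inE => /orP [/eqP bZ|/eqP bZ].
  have YZ : Y :\: Z = Y.
    apply: minsetinf minY _ (subsetDl Y Z); rewrite /= -symdiff_setD //.
    by rewrite imset_symdiff ?boundary_symdiff ?bY ?bZ ?symdiffs0 //; apply: val_inj.
  have [z zZ] := set0Pn _ Z0.
  by move: (subsetP ZY z zZ); rewrite -YZ !inE zZ.
by apply: minsetinf minY _ ZY; rewrite /= bZ.
Qed.

Lemma nontrivial_binary_circuit_injection :
  exists (S : finType) (C : {set {set S}}) (f : {set T} -> S),
    [/\ matroid C, binary_matroid C, circuit_injection e C f & nontrivial_ci e C f].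
Proof.
have [Y minY bY] := minimal_join_circuit.
have /minimal_membersP [/set0Pn [s0 _] _ _] := minY.
pose f := insubd s0 : {set T} -> edge_cell.
have cycle_image c : graph_cycle e c -> val @: (f @: cycle_edges c) = cycle_edges c.
  by case=> /andP [ce _] _; apply/val_insubd_imset/cycle_edges_sub.
exists edge_cell, (minimal_members join_space), f; split.
- by apply: minimal_members_matroid join_space_symdiff _; apply/card_gt0P; exists s0.
- exact: minimal_members_binary join_space_symdiff.
- split=> [A B Ae Be fAB | s | _ [c [c_cycle ->]]].
  + by rewrite -(insubdK s0 Ae) -(insubdK s0 Be); congr val.
  + by exists (val s); [exact: valP | exact: valKd].
  + exact: cycle_circuit c_cycle (cycle_image c c_cycle).
exists Y => // _ [c [c_cycle ->]] fcY; have [/andP [_ c_uniq] c_size] := c_cycle.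
by move: F0_boundary; rewrite -bY -fcY cycle_image // boundary_cycle_edges ?eqxx.
Qed.

End BinaryInjection.

Section NoNontrivialInjection.
Variables (T : finType) (e : rel T).
Hypotheses (e_sym : symmetric e) (e_irr : irreflexive e).
Hypothesis no_injection : forall (S : finType) (C : {set {set S}}) (f : {set T} -> S),
  matroid C -> binary_matroid C -> circuit_injection e C f -> ~ nontrivial_ci e C f.

Lemma boundary_on_cycle (F : {set {set T}}) : F \subset edges e -> boundary F != set0 ->
  exists c, graph_cycle e c /\ boundary F \subset [set x in c].
Proof.
move=> Fe F_neq0; apply: NNPP => no_cycle.
have uncovered c : graph_cycle e c -> ~ boundary F \subset [set x in c].
  by move=> c_cycle Fc; apply: no_cycle; exists c.
have [S [C [f [C_matroid C_binary f_inj f_nontrivial]]]] :=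
  nontrivial_binary_circuit_injection Fe F_neq0 uncovered.
exact: no_injection C_matroid C_binary f_inj f_nontrivial.
Qed.

(* If x and y were disconnected, the two edges xx' and yy' would have a
   boundary containing x and y that lies on no cycle. *)
Lemma connected_of_no_isolated : no_isolated e -> forall x y, connect e x y.
Proof.
move=> no_iso x y; apply: contraT => nxy.
have [x' exx'] := no_iso x; have [y' eyy'] := no_iso y.
have neq_irr u v : e u v -> u != v by move=> euv; apply: contraTneq euv => ->; rewrite e_irr.
have xy : x != y by apply: contraNneq nxy => ->; exact: connect0.
have xy' : x != y' by apply: contraNneq nxy => ->; rewrite sym_connect_sym // connect1.
have x'y : x' != y by apply: contraNneq nxy => <-; exact: connect1.
pose F := symdiff [set [set x; x']] [set [set y; y']].
have bF : boundary F = symdiff (symdiff [set x] [set x']) (symdiff [set y] [set y']).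
  by rewrite boundary_symdiff !boundary_edge ?neq_irr.
have xF : x \in boundary F.
  by rewrite bF !in_symdiff !inE eqxx (negbTE (neq_irr _ _ exx')) (negbTE xy) (negbTE xy').
have yF : y \in boundary F.
  rewrite bF !in_symdiff !inE eqxx (negbTE (neq_irr _ _ eyy')) eq_sym (negbTE xy).
  by rewrite eq_sym (negbTE x'y).
have Fe : F \subset edges e by rewrite symdiff_edges // sub1set edges_pair.
have F_neq0 : boundary F != set0 by apply/set0Pn; exists x.
have [c [c_cycle Fc]] := boundary_on_cycle Fe F_neq0.
have := subsetP Fc x xF; have := subsetP Fc y yF; rewrite !inE => yc xc.
by rewrite (cycle_connect e_sym c_cycle xc yc) in nxy.
Qed.

End NoNontrivialInjection.

Theorem lemma2p2 (T : finType) (e : rel T) :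
  simple_graph e -> 0 < #|T| -> no_isolated e ->
  (forall (S : finType) (C : {set {set S}}) (f : {set T} -> S),
     matroid C -> binary_matroid C -> circuit_injection e C f ->
     ~ nontrivial_ci e C f) ->
  (forall N, #|T| = N.*2 -> hamiltonian e) /\
  (forall N, #|T| = N.*2.+1 -> almost_hamiltonian e).
Proof.
move=> [e_sym e_irr] T_gt0 no_iso no_injection.
have conn := connected_of_no_isolated e_sym e_irr no_injection no_iso.
have covering_cycle T0 : T0 != set0 -> ~~ odd #|T0| ->
    exists c, graph_cycle e c /\ T0 \subset [set x in c].
  move=> T0_neq0 T0_even; have [F Fe bF] := even_boundary e_irr conn T0_even.
  by rewrite -bF; apply: (boundary_on_cycle no_injection Fe); rewrite bF.
split=> N card_T.
  have [||c [c_cycle Tc]] := covering_cycle [set: T].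
  - by rewrite -card_gt0 cardsT.
  - by rewrite cardsT card_T odd_double.
  by exists c; split=> // x; have := subsetP Tc x; rewrite !inE; apply.
move=> A card_A; apply: covering_cycle; last by rewrite card_A card_T subn1 odd_double.
have := no_isolated_card_gt1 e_irr no_iso T_gt0.
by rewrite -card_gt0 card_A card_T subn1; case: N {card_T card_A}.
Qed.
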